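(* Let $\mathbb{C}$ be a pointed protomodular category and let $m:S\to X$ be a normal monomorphism in $\mathbb{C}$ such that the generic split extension with kernel $S$ exists in $\mathbb{C}$ and the generic split extension with kernel $(S,X,m)$ exists in the arrow category $\mathbb{C}^{\mathbf{2}}$. If $m$ has trivial centralizer, then $q_1:[S,X,m]\to[S]$ is a monomorphism.
   Context: $\mathbb{C}$ is pointed with finite limits. A split extension is a diagram $X\xrightarrow{\kappa}A\underset{\beta}{\overset{\alpha}{\rightleftarrows}}B$ with $\alpha\beta=1_B$ and $\kappa$ a kernel of $\alpha$; morphisms of split extensions are triples of morphisms commuting with the structure. $\mathbb{C}$ is protomodular if the split short five lemma holds (if the outer components of a morphism of split extensions are isomorphisms, so is the middle one). A generic split extension with kernel $X$, written $X\xrightarrow{k}[X]\ltimes X\underset{i}{\overset{p_1}{\rightleftarrows}}[X]$, is a terminal object in the category of split extensions with kernel $X$ and morphisms whose kernel component is $1_X$. $\mathbb{C}^{\mathbf 2}$ is the category whose objects are morphisms $f:X\to Z$ of $\mathbb{C}$ and whose morphisms are commutative squares; split extensions and generic split extensions in $\mathbb{C}^{\mathbf 2}$ are defined in the same way (it is pointed with finite limits computed componentwise). A generic split extension with kernel $(S,X,m)$ (the object $m:S\to X$) in $\mathbb{C}^{\mathbf 2}$ consists of a split extension $S\to[S,X,m]\ltimes S\rightleftarrows[S,X,m]$ in $\mathbb{C}$, the generic split extension with kernel $X$ in $\mathbb{C}$ (its codomain row), and vertical morphisms $m$, $q_2\ltimes m$, $q_2:[S,X,m]\to[X]$ forming a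 morphism of split extensions. $q_1:[S,X,m]\to[S]$ is the unique morphism (codomain component) of the unique morphism from the split extension $S\to[S,X,m]\ltimes S\rightleftarrows[S,X,m]$ into the generic split extension with kernel $S$. A normal monomorphism is a kernel of some morphism. Morphisms $f:A\to X$, $g:B\to X$ commute if some $\varphi:A\times B\to X$ has $\varphi\langle1,0\rangle=f$, $\varphi\langle0,1\rangle=g$; the centralizer $Z_X(A,f)\to X$ of $f$ is the terminal object among morphisms into $X$ commuting with $f$; $f$ has trivial centralizer if $Z_X(A,f)=0$. *)

From Stdlib Require Import ProofIrrelevance.
Set Implicit Arguments.
Unset Strict Implicit.

Record Cat := {
  ob :> Type;
  hom : ob -> ob -> Type;
  cmp : forall a b c : ob, hom b c -> hom a b -> hom a c;
  idm : forall a : ob, hom a a;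
  cmp_assoc : forall a b c d (h : hom c d) (g : hom b c) (f : hom a b),
      cmp h (cmp g f) = cmp (cmp h g) f;
  cmp_id_l : forall a b (f : hom a b), cmp (idm b) f = f;
  cmp_id_r : forall a b (f : hom a b), cmp f (idm a) = f }.
Arguments hom {_} _ _.
Arguments cmp {_ _ _ _} _ _.
Arguments idm {_} _.
Notation "g ∘ f" := (cmp g f) (at level 40, left associativity).

Record ZeroObj (C : Cat) := {
  zo : ob C;
  to_z : forall a : ob C, hom a zo;
  from_z : forall a : ob C, hom zo a;
  to_z_uniq : forall a (f : hom a zo), f = to_z a;
  from_z_uniq : forall a (f : hom zo a), f = from_z a }.

Arguments zo {C} _.
Arguments to_z {C} _ _.
Arguments from_z {C} _ _.
Arguments to_z_uniq {C} _ _ _.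
Arguments from_z_uniq {C} _ _ _.

Record PCat := { pc :> Cat; pzero : ZeroObj pc }.

Definition zero {C : PCat} (a b : C) : hom a b :=
  from_z (pzero C) b ∘ to_z (pzero C) a.

Definition is_mono {C : Cat} {a b : C} (m : hom a b) : Prop :=
  forall (c : C) (g h : hom c a), m ∘ g = m ∘ h -> g = h.

Definition is_iso {C : Cat} {a b : C} (f : hom a b) : Prop :=
  exists g : hom b a, g ∘ f = idm a /\ f ∘ g = idm b.

Definition is_pullback {C : Cat} {a b c p : C} (f : hom a c) (g : hom b c)
  (pa : hom p a) (pb : hom p b) : Prop :=
  f ∘ pa = g ∘ pb /\
  forall (q : C) (qa : hom q a) (qb : hom q b), f ∘ qa = g ∘ qb ->
    exists u : hom q p, (pa ∘ u = qa /\ pb ∘ u = qb) /\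
      forall u' : hom q p, pa ∘ u' = qa -> pb ∘ u' = qb -> u' = u.

Definition has_pullbacks (C : Cat) : Prop :=
  forall (a b c : C) (f : hom a c) (g : hom b c),
    exists (p : C) (pa : hom p a) (pb : hom p b), is_pullback f g pa pb.

Definition has_terminal (C : Cat) : Prop :=
  exists t : C, forall a : C, exists f : hom a t, forall g : hom a t, g = f.

Definition has_finite_limits (C : Cat) : Prop := has_terminal C /\ has_pullbacks C.

Definition is_product {C : Cat} {a b p : C} (p1 : hom p a) (p2 : hom p b) : Prop :=
  forall (q : C) (f : hom q a) (g : hom q b),
    exists u : hom q p, (p1 ∘ u = f /\ p2 ∘ u = g) /\
      forall u' : hom q p, p1 ∘ u' = f -> p2 ∘ u' = g -> u' = u.

Definition is_kernel {C : PCat} {k a b : C} (kap : hom k a) (f : hom a b) : Prop :=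
  f ∘ kap = zero k b /\
  forall (q : C) (h : hom q a), f ∘ h = zero q b ->
    exists u : hom q k, kap ∘ u = h /\ forall u' : hom q k, kap ∘ u' = h -> u' = u.

Definition is_normal_mono {C : PCat} {s x : C} (m : hom s x) : Prop :=
  exists (y : C) (f : hom x y), is_kernel m f.

Record SplitExt (C : PCat) (X : C) := {
  se_A : C;
  se_B : C;
  se_k : hom X se_A;
  se_a : hom se_A se_B;
  se_b : hom se_B se_A;
  se_ab : se_a ∘ se_b = idm se_B;
  se_ker : is_kernel se_k se_a }.
Arguments SplitExt : clear implicits.
Arguments se_A {C X} _.
Arguments se_B {C X} _.
Arguments se_k {C X} _.
Arguments se_a {C X} _.
Arguments se_b {C X} _.

Definition se_morph_raw {C : Cat} {X A B X' A' B' : C}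
  (k : hom X A) (a : hom A B) (b : hom B A)
  (k' : hom X' A') (a' : hom A' B') (b' : hom B' A')
  (u : hom X X') (f : hom A A') (g : hom B B') : Prop :=
  f ∘ k = k' ∘ u /\ a' ∘ f = g ∘ a /\ f ∘ b = b' ∘ g.

Definition is_se_morph {C : PCat} {X X' : C} (E : SplitExt C X) (E' : SplitExt C X')
  (u : hom X X') (f : hom (se_A E) (se_A E')) (g : hom (se_B E) (se_B E')) : Prop :=
  se_morph_raw (se_k E) (se_a E) (se_b E) (se_k E') (se_a E') (se_b E') u f g.

Arguments is_se_morph {C X X'} E E' u f g.

Definition is_generic {C : PCat} {X : C} (G : SplitExt C X) : Prop :=
  forall E : SplitExt C X,
    exists (f : hom (se_A E) (se_A G)) (g : hom (se_B E) (se_B G)),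
      is_se_morph E G (idm X) f g /\
      forall f' g', is_se_morph E G (idm X) f' g' -> f' = f /\ g' = g.

(** Protomodularity: the split short five lemma *)
Definition is_protomodular (C : PCat) : Prop :=
  forall (X X' : C) (E : SplitExt C X) (E' : SplitExt C X') u f g,
    is_se_morph E E' u f g -> is_iso u -> is_iso g -> is_iso f.

Definition commute {C : PCat} {a b x : C} (f : hom a x) (g : hom b x) : Prop :=
  exists (p : C) (p1 : hom p a) (p2 : hom p b) (i1 : hom a p) (i2 : hom b p)
         (phi : hom p x),
    is_product p1 p2 /\
    p1 ∘ i1 = idm a /\ p2 ∘ i1 = zero a b /\
    p1 ∘ i2 = zero b a /\ p2 ∘ i2 = idm b /\
    phi ∘ i1 = f /\ phi ∘ i2 = g.

Definition is_centralizer {C : PCat} {a x z : C} (f : hom a x) (c : hom z x) : Prop :=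
  commute f c /\
  forall (b : C) (g : hom b x), commute f g ->
    exists u : hom b z, c ∘ u = g /\ forall u' : hom b z, c ∘ u' = g -> u' = u.

Definition trivial_centralizer {C : PCat} {a x : C} (f : hom a x) : Prop :=
  exists (z : C) (c : hom z x), is_centralizer f c /\ idm z = zero z z.

Record arr (C : Cat) := { adom : C; acod : C; amap : hom adom acod }.
Arguments adom {C} _.
Arguments acod {C} _.
Arguments amap {C} _.

Record ahom (C : Cat) (x y : arr C) := {
  h0 : hom (adom x) (adom y);
  h1 : hom (acod x) (acod y);
  hsq : h1 ∘ amap x = amap y ∘ h0 }.
Arguments h0 {C x y} _.
Arguments h1 {C x y} _.

Lemma ahom_eq (C : Cat) (x y : arr C) (f g : ahom x y) :
  h0 f = h0 g -> h1 f = h1 g -> f = g.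
Proof.
  destruct f as [f0 f1 fs], g as [g0 g1 gs]; simpl; intros -> ->.
  f_equal; apply proof_irrelevance.
Qed.

Lemma acmp_sq (C : Cat) (x y z : arr C) (g : ahom y z) (f : ahom x y) :
  (h1 g ∘ h1 f) ∘ amap x = amap z ∘ (h0 g ∘ h0 f).
Proof.
  rewrite <- cmp_assoc, (hsq f), cmp_assoc, (hsq g), cmp_assoc; reflexivity.
Qed.

Definition acmp (C : Cat) (x y z : arr C) (g : ahom y z) (f : ahom x y) : ahom x z :=
  {| h0 := h0 g ∘ h0 f; h1 := h1 g ∘ h1 f; hsq := acmp_sq g f |}.

Lemma aid_sq (C : Cat) (x : arr C) : idm (acod x) ∘ amap x = amap x ∘ idm (adom x).
Proof. rewrite cmp_id_l, cmp_id_r; reflexivity. Qed.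

Definition aid (C : Cat) (x : arr C) : ahom x x :=
  {| h0 := idm _; h1 := idm _; hsq := aid_sq x |}.

Lemma acmp_assoc (C : Cat) (a b c d : arr C) (h : ahom c d) (g : ahom b c) (f : ahom a b) :
  acmp h (acmp g f) = acmp (acmp h g) f.
Proof. apply ahom_eq; simpl; apply cmp_assoc. Qed.

Lemma acmp_id_l (C : Cat) (a b : arr C) (f : ahom a b) : acmp (aid b) f = f.
Proof. apply ahom_eq; simpl; apply cmp_id_l. Qed.

Lemma acmp_id_r (C : Cat) (a b : arr C) (f : ahom a b) : acmp f (aid a) = f.
Proof. apply ahom_eq; simpl; apply cmp_id_r. Qed.

Definition ArrowCat (C : Cat) : Cat :=
  {| ob := arr C; hom := @ahom C; cmp := @acmp C; idm := @aid C;
     cmp_assoc := @acmp_assoc C; cmp_id_l := @acmp_id_l C; cmp_id_r := @acmp_id_r C |}.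

Section ArrowZero.
Local Definition azo (C : Cat) (Z : ZeroObj C) : arr C :=
  {| adom := zo Z; acod := zo Z; amap := idm (zo Z) |}.

Local Lemma ato_sq (C : Cat) (Z : ZeroObj C) (a : arr C) :
  to_z Z (acod a) ∘ amap a = amap (azo Z) ∘ to_z Z (adom a).
Proof.
  transitivity (to_z Z (adom a)); [apply to_z_uniq | symmetry; apply to_z_uniq].
Qed.

Local Lemma afrom_sq (C : Cat) (Z : ZeroObj C) (a : arr C) :
  from_z Z (acod a) ∘ amap (azo Z) = amap a ∘ from_z Z (adom a).
Proof.
  transitivity (from_z Z (acod a)); [apply from_z_uniq | symmetry; apply from_z_uniq].
Qed.

Local Definition ato (C : Cat) (Z : ZeroObj C) (a : arr C) : ahom a (azo Z) :=
  @Build_ahom C a (azo Z) (to_z Z (adom a)) (to_z Z (acod a)) (ato_sq Z a).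
Local Definition afrom (C : Cat) (Z : ZeroObj C) (a : arr C) : ahom (azo Z) a :=
  @Build_ahom C (azo Z) a (from_z Z (adom a)) (from_z Z (acod a)) (afrom_sq Z a).

Local Lemma ato_uniq (C : Cat) (Z : ZeroObj C) (a : arr C) (f : ahom a (azo Z)) :
  f = ato Z a.
Proof. apply ahom_eq; apply to_z_uniq. Qed.
Local Lemma afrom_uniq (C : Cat) (Z : ZeroObj C) (a : arr C) (f : ahom (azo Z) a) :
  f = afrom Z a.
Proof. apply ahom_eq; apply from_z_uniq. Qed.

Definition arrow_zero (C : Cat) (Z : ZeroObj C) : ZeroObj (ArrowCat C) :=
  @Build_ZeroObj (ArrowCat C) (azo Z : ob (ArrowCat C)) (@ato C Z) (@afrom C Z)
    (@ato_uniq C Z) (@afrom_uniq C Z).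
End ArrowZero.

Definition ArrowPCat (C : PCat) : PCat :=
  {| pc := ArrowCat C; pzero := arrow_zero (pzero C) |}.

Definition arr_of {C : Cat} {s x : C} (m : hom s x) : arr C :=
  {| adom := s; acod := x; amap := m |}.

(* The codomain row of the generic split extension GM in C^2 is the generic split
   extension with kernel X, and q2 : [S,X,m] -> [X] is a monomorphism: pulling GM back
   along g with q2 g = 0 gives an extension whose codomain row, hence (m being normal)
   the whole extension, has trivial action, so g = 0.  The conjugation action of X on
   the pair (m, 1_X) is classified by some c : X -> [S,X,m], and since m has trivial
   centralizer, q1 c has trivial kernel.
   Now let q1 g = 0, and let D = X ⋊ T be the codomain row of GM pulled back along g.
   The conjugation action of D on X is classified by a map D -> [X] that restricts to
   q2 c on X and to q2 g on T; since q2 is mono it is q2 φ with φ restricting to c and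
   g.  Then q1 φ restricts to the mono q1 c on X and to 0 on T, which yields a
   retraction D -> X vanishing on T: D has trivial action, so g = 0.  In a
   protomodular category a morphism with trivial kernel is mono. *)


Section Pointed.
Context {C : PCat}.

Lemma hom_to_zero_eq {a : C} (f g : hom a (zo (pzero C))) : f = g.
Proof. now rewrite (to_z_uniq _ _ f), (to_z_uniq _ _ g). Qed.

Lemma hom_from_zero_eq {a : C} (f g : hom (zo (pzero C)) a) : f = g.
Proof. now rewrite (from_z_uniq _ _ f), (from_z_uniq _ _ g). Qed.

Lemma cmp_through_zero {a b : C} (g : hom (zo (pzero C)) b) (f : hom a (zo (pzero C))) :
  g ∘ f = zero a b.
Proof.
  unfold zero; now rewrite (hom_from_zero_eq g (from_z _ b)), (hom_to_zero_eq f (to_z _ a)).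
Qed.

Lemma cmp_zero_l {a b c : C} (f : hom a b) : zero b c ∘ f = zero a c.
Proof. unfold zero; rewrite <- cmp_assoc; apply cmp_through_zero. Qed.

Lemma cmp_zero_r {a b c : C} (g : hom b c) : g ∘ zero a b = zero a c.
Proof. unfold zero; rewrite cmp_assoc; apply cmp_through_zero. Qed.

Lemma idm_iso (a : C) : is_iso (idm a).
Proof. exists (idm a); now rewrite cmp_id_l. Qed.

Lemma kernel_mono {k a b : C} {kap : hom k a} {f : hom a b} : is_kernel kap f -> is_mono kap.
Proof.
  intros [Hz Hu] c g h E.
  assert (Hf : f ∘ (kap ∘ g) = zero c b) by now rewrite cmp_assoc, Hz, cmp_zero_l.
  destruct (Hu c (kap ∘ g) Hf) as [u [_ Hu']].
  now rewrite (Hu' g eq_refl), (Hu' h (eq_sym E)).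
Qed.

Lemma kernel_lift {k a b q : C} {kap : hom k a} {f : hom a b} {h : hom q a} :
  is_kernel kap f -> f ∘ h = zero q b -> exists u, kap ∘ u = h.
Proof. intros [_ Hu] E; destruct (Hu q h E) as [u [H _]]; eauto. Qed.

Lemma pullback_hom_eq {a b c p q : C} {f : hom a c} {g : hom b c}
  {pa : hom p a} {pb : hom p b} {x y : hom q p} :
  is_pullback f g pa pb -> pa ∘ x = pa ∘ y -> pb ∘ x = pb ∘ y -> x = y.
Proof.
  intros [E H] E1 E2.
  assert (Hq : f ∘ (pa ∘ x) = g ∘ (pb ∘ x)) by now rewrite !cmp_assoc, E.
  destruct (H q _ _ Hq) as [u [_ Hu]].
  now rewrite (Hu x eq_refl eq_refl), (Hu y (eq_sym E1) (eq_sym E2)).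
Qed.

Lemma pullback_lift {a b c p q : C} {f : hom a c} {g : hom b c}
  {pa : hom p a} {pb : hom p b} {x : hom q a} {y : hom q b} :
  is_pullback f g pa pb -> f ∘ x = g ∘ y -> exists u, pa ∘ u = x /\ pb ∘ u = y.
Proof. intros [_ H] E; destruct (H q x y E) as [u [Hu _]]; eauto. Qed.

Lemma pullback_mono {a b c p : C} {f : hom a c} {g : hom b c}
  {pa : hom p a} {pb : hom p b} :
  is_pullback f g pa pb -> is_mono g -> is_mono pa.
Proof.
  intros Hpb Hg q x y E; apply (pullback_hom_eq Hpb E), Hg.
  destruct Hpb as [Hsq _]; now rewrite !cmp_assoc, <- Hsq, <- !cmp_assoc, E.
Qed.

Lemma product_hom_eq {a b p q : C} {p1 : hom p a} {p2 : hom p b} {x y : hom q p} :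
  is_product p1 p2 -> p1 ∘ x = p1 ∘ y -> p2 ∘ x = p2 ∘ y -> x = y.
Proof.
  intros H E1 E2; destruct (H q (p1 ∘ x) (p2 ∘ x)) as [u [_ Hu]].
  now rewrite (Hu x eq_refl eq_refl), (Hu y (eq_sym E1) (eq_sym E2)).
Qed.

Lemma product_pair {a b p q : C} {p1 : hom p a} {p2 : hom p b} (x : hom q a) (y : hom q b) :
  is_product p1 p2 -> exists u, p1 ∘ u = x /\ p2 ∘ u = y.
Proof. intros H; destruct (H q x y) as [u [Hu _]]; eauto. Qed.

Lemma products_exist : has_pullbacks C ->
  forall a b : C, exists (p : C) (p1 : hom p a) (p2 : hom p b), is_product p1 p2.
Proof.
  intros HL a b.
  destruct (HL _ _ _ (to_z (pzero C) a) (to_z (pzero C) b)) as [p [p1 [p2 [_ H]]]].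
  exists p, p1, p2; intros q f g.
  destruct (H q f g (hom_to_zero_eq _ _)) as [u Hu]; eauto.
Qed.

Definition is_split_ext {K A B : C} (k : hom K A) (a : hom A B) (b : hom B A) : Prop :=
  a ∘ b = idm B /\ is_kernel k a.

Definition mk_split_ext {K A B : C} {k : hom K A} {a : hom A B} {b : hom B A}
  (H : is_split_ext k a b) : SplitExt C K :=
  {| se_A := A; se_B := B; se_k := k; se_a := a; se_b := b;
     se_ab := proj1 H; se_ker := proj2 H |}.

Lemma split_ext_spec {K : C} (E : SplitExt C K) : is_split_ext (se_k E) (se_a E) (se_b E).
Proof. exact (conj (se_ab E) (se_ker E)). Qed.

Lemma product_split_ext {K B P : C} {pr1 : hom P K} {pr2 : hom P B} {i1 : hom K P}
  {i2 : hom B P} :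
  is_product pr1 pr2 -> pr1 ∘ i1 = idm K -> pr2 ∘ i1 = zero K B ->
  pr2 ∘ i2 = idm B -> is_split_ext i1 pr2 i2.
Proof.
  intros HPr H11 H12 H22; split; [exact H22|split; [exact H12|]].
  intros q h Hh; exists (pr1 ∘ h); split.
  - apply (product_hom_eq HPr); rewrite cmp_assoc.
    + now rewrite H11, cmp_id_l.
    + now rewrite H12, cmp_zero_l, Hh.
  - intros v E; now rewrite <- E, cmp_assoc, H11, cmp_id_l.
Qed.

Lemma se_morph_cmp {K A B K' A' B' K'' A'' B'' : C}
  {k : hom K A} {a : hom A B} {b : hom B A}
  {k' : hom K' A'} {a' : hom A' B'} {b' : hom B' A'}
  {k'' : hom K'' A''} {a'' : hom A'' B''} {b'' : hom B'' A''} {u f g u' f' g'} :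
  se_morph_raw k a b k' a' b' u f g -> se_morph_raw k' a' b' k'' a'' b'' u' f' g' ->
  se_morph_raw k a b k'' a'' b'' (u' ∘ u) (f' ∘ f) (g' ∘ g).
Proof.
  intros [Hk [Ha Hb]] [Hk' [Ha' Hb']]; split; [|split].
  - now rewrite <- cmp_assoc, Hk, cmp_assoc, Hk', cmp_assoc.
  - now rewrite cmp_assoc, Ha', <- cmp_assoc, Ha, cmp_assoc.
  - now rewrite <- cmp_assoc, Hb, cmp_assoc, Hb', cmp_assoc.
Qed.

Lemma split_ext_pullback (HL : has_pullbacks C) {K : C} (E : SplitExt C K)
  {T : C} (g : hom T (se_B E)) :
  exists (P : C) (kP : hom K P) (aP : hom P T) (bP : hom T P) (f : hom P (se_A E)),
    is_split_ext kP aP bP /\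
    se_morph_raw kP aP bP (se_k E) (se_a E) (se_b E) (idm K) f g.
Proof.
  destruct (HL _ _ _ (se_a E) g) as [P [f [aP Hpb]]].
  destruct (se_ker E) as [Hak HkE].
  destruct (pullback_lift Hpb (x := se_k E) (y := zero K T)) as [kP [Hk1 Hk2]].
  { now rewrite Hak, cmp_zero_r. }
  destruct (pullback_lift Hpb (x := se_b E ∘ g) (y := idm T)) as [bP [Hb1 Hb2]].
  { now rewrite cmp_assoc, se_ab, cmp_id_l, cmp_id_r. }
  exists P, kP, aP, bP, f; split; [split; [exact Hb2|split; [exact Hk2|]]|].
  - intros q h Hh.
    assert (Hfh : se_a E ∘ (f ∘ h) = zero q (se_B E)).
    { destruct Hpb as [Hsq _]; now rewrite cmp_assoc, Hsq, <- cmp_assoc, Hh, cmp_zero_r. }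
    destruct (HkE q _ Hfh) as [v [Hv Hv']]; exists v; split.
    + apply (pullback_hom_eq Hpb); rewrite cmp_assoc; [now rewrite Hk1|].
      now rewrite Hk2, cmp_zero_l, Hh.
    + intros v' E'; apply Hv'; now rewrite <- Hk1, <- cmp_assoc, E'.
  - split; [now rewrite cmp_id_r|split; [exact (proj1 Hpb)|exact Hb1]].
Qed.

Lemma idm_split_ext (S : C) : is_split_ext (idm S) (to_z (pzero C) S) (from_z (pzero C) S).
Proof.
  split; [apply hom_to_zero_eq|split; [apply hom_to_zero_eq|]].
  intros q h _; exists h; split; [apply cmp_id_l|]; intros v E; now rewrite cmp_id_l in E.
Qed.

Lemma idm_kernel (X : C) : is_kernel (idm X) (to_z (pzero C) X).
Proof. exact (proj2 (idm_split_ext X)). Qed.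

(* The kernel pair A ×_B A of a, split by the diagonal, with kernel <0, k>: the
   conjugation action of A on its normal subobject k. *)
Definition is_conjugation_ext {K A B R : C} (k : hom K A) (a : hom A B)
  (kR : hom K R) (r1 r2 : hom R A) (d : hom A R) : Prop :=
  is_pullback a a r1 r2 /\ r1 ∘ kR = zero K A /\ r2 ∘ kR = k /\
  r1 ∘ d = idm A /\ r2 ∘ d = idm A.

Lemma conjugation_ext_exists (HL : has_pullbacks C) {K A B : C} (k : hom K A) (a : hom A B) :
  a ∘ k = zero K B ->
  exists (R : C) (kR : hom K R) (r1 r2 : hom R A) (d : hom A R),
    is_conjugation_ext k a kR r1 r2 d.
Proof.
  intros Hak; destruct (HL _ _ _ a a) as [R [r1 [r2 Hpb]]].
  destruct (pullback_lift Hpb (x := zero K A) (y := k)) as [kR [Hk1 Hk2]].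
  { now rewrite cmp_zero_r, Hak. }
  destruct (pullback_lift Hpb (x := idm A) (y := idm A) eq_refl) as [d [Hd1 Hd2]].
  now exists R, kR, r1, r2, d.
Qed.

Lemma conjugation_ext_split {K A B R : C} {k : hom K A} {a : hom A B}
  {kR : hom K R} {r1 r2 : hom R A} {d : hom A R} :
  is_kernel k a -> is_conjugation_ext k a kR r1 r2 d -> is_split_ext kR r1 d.
Proof.
  intros [Hak Hk] [Hpb [Hk1 [Hk2 [Hd1 Hd2]]]]; split; [exact Hd1|split; [exact Hk1|]].
  intros q h Hh.
  assert (Hh2 : a ∘ (r2 ∘ h) = zero q B).
  { destruct Hpb as [Hsq _]; now rewrite cmp_assoc, <- Hsq, <- cmp_assoc, Hh, cmp_zero_r. }
  destruct (Hk q _ Hh2) as [v [Hv Hv']]; exists v; split.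
  - apply (pullback_hom_eq Hpb); rewrite cmp_assoc; [now rewrite Hk1, cmp_zero_l|now rewrite Hk2].
  - intros v' E; apply Hv'; now rewrite <- Hk2, <- cmp_assoc, E.
Qed.

Lemma conjugation_ext_map {K A B R K' A' B' R' : C}
  {k : hom K A} {a : hom A B} {kR : hom K R} {r1 r2 : hom R A} {d : hom A R}
  {k' : hom K' A'} {a' : hom A' B'} {kR' : hom K' R'} {r1' r2' : hom R' A'} {d' : hom A' R'}
  (u : hom K K') (f : hom A A') (g : hom B B') :
  is_conjugation_ext k a kR r1 r2 d -> is_conjugation_ext k' a' kR' r1' r2' d' ->
  f ∘ k = k' ∘ u -> a' ∘ f = g ∘ a ->
  exists j, se_morph_raw kR r1 d kR' r1' d' u j f.
Proof.
  intros [Hpb [Hk1 [Hk2 [Hd1 Hd2]]]] [Hpb' [Hk1' [Hk2' [Hd1' Hd2']]]] Hfk Hfa.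
  destruct (pullback_lift Hpb' (x := f ∘ r1) (y := f ∘ r2)) as [j [Hj1 Hj2]].
  { now rewrite !cmp_assoc, Hfa, <- !cmp_assoc, (proj1 Hpb). }
  exists j; split; [|split; [exact Hj1|]]; apply (pullback_hom_eq Hpb'); rewrite !cmp_assoc.
  - now rewrite Hj1, Hk1', <- cmp_assoc, Hk1, cmp_zero_l, cmp_zero_r.
  - now rewrite Hj2, Hk2', <- cmp_assoc, Hk2.
  - now rewrite Hj1, Hd1', <- cmp_assoc, Hd1, cmp_id_l, cmp_id_r.
  - now rewrite Hj2, Hd2', <- cmp_assoc, Hd2, cmp_id_l, cmp_id_r.
Qed.

Lemma conjugation_ext_section {K A B R : C} {k : hom K A} {a : hom A B} {b : hom B A}
  {kR : hom K R} {r1 r2 : hom R A} {d : hom A R} :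
  is_split_ext k a b -> is_conjugation_ext k a kR r1 r2 d ->
  exists j, se_morph_raw k a b kR r1 d (idm K) j b.
Proof.
  intros [Hab [Hak _]] [Hpb [Hk1 [Hk2 [Hd1 Hd2]]]].
  destruct (pullback_lift Hpb (x := b ∘ a) (y := idm A)) as [j [Hj1 Hj2]].
  { now rewrite cmp_assoc, Hab, cmp_id_l, cmp_id_r. }
  exists j; split; [|split; [exact Hj1|]]; apply (pullback_hom_eq Hpb); rewrite !cmp_assoc.
  - now rewrite Hj1, Hk1, <- cmp_assoc, Hak, cmp_zero_r, cmp_id_r.
  - now rewrite Hj2, Hk2, cmp_id_l, cmp_id_r.
  - now rewrite Hj1, Hd1, <- cmp_assoc, Hab, cmp_id_l, cmp_id_r.
  - now rewrite Hj2, Hd2, !cmp_id_l.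
Qed.

(* B acts trivially on K: the split extension is the product K × B. *)
Definition trivial_action {K A B : C} (k : hom K A) (b : hom B A) : Prop :=
  exists r : hom A K, r ∘ k = idm K /\ r ∘ b = zero B K.

Lemma se_morph_of_trivial_action {K : C} (E G : SplitExt C K) :
  trivial_action (se_k E) (se_b E) ->
  exists f, is_se_morph E G (idm K) f (zero (se_B E) (se_B G)).
Proof.
  intros [r [Hrk Hrb]]; exists (se_k G ∘ r); split; [|split].
  - now rewrite <- cmp_assoc, Hrk.
  - now rewrite cmp_assoc, (proj1 (se_ker G)), !cmp_zero_l.
  - now rewrite <- cmp_assoc, Hrb, !cmp_zero_r.
Qed.

Lemma trivial_action_of_zero_base {K A B : C} {k : hom K A} {a : hom A B} {b : hom B A}
  (G : SplitExt C K) (f : hom A (se_A G)) :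
  se_morph_raw k a b (se_k G) (se_a G) (se_b G) (idm K) f (zero B (se_B G)) ->
  trivial_action k b.
Proof.
  intros [Hk [Ha Hb]]; rewrite cmp_zero_l in Ha.
  destruct (kernel_lift (se_ker G) Ha) as [r Hr]; exists r.
  split; apply (kernel_mono (se_ker G)); rewrite cmp_assoc, Hr.
  - now rewrite Hk, !cmp_id_r.
  - now rewrite Hb, !cmp_zero_r.
Qed.

Lemma generic_base_unique {K : C} {G : SplitExt C K} (HG : is_generic G)
  (E : SplitExt C K) {f g f' g'} :
  is_se_morph E G (idm K) f g -> is_se_morph E G (idm K) f' g' -> g = g'.
Proof.
  intros H H'; destruct (HG E) as [f0 [g0 [_ U]]].
  now rewrite (proj2 (U f g H)), (proj2 (U f' g' H')).
Qed.

Lemma generic_base_zero {K : C} {G : SplitExt C K} (HG : is_generic G)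
  (E : SplitExt C K) {f g} :
  is_se_morph E G (idm K) f g -> trivial_action (se_k E) (se_b E) ->
  g = zero (se_B E) (se_B G).
Proof.
  intros H Htriv; destruct (se_morph_of_trivial_action E G Htriv) as [f0 H0].
  exact (generic_base_unique HG E H H0).
Qed.

Lemma trivial_centralizer_commute {a x : C} (f : hom a x) :
  trivial_centralizer f -> forall (b : C) (g : hom b x), commute f g -> g = zero b x.
Proof.
  intros [z [c [[_ Hc] Hz]]] b g Hg; destruct (Hc b g Hg) as [u [Hu _]].
  now rewrite <- Hu, <- (cmp_id_l u), Hz, cmp_zero_l, cmp_zero_r.
Qed.

End Pointed.

Section Protomodular.
Context {C : PCat} (HP : is_protomodular C) (HL : has_pullbacks C).

Lemma split_ext_mono_iso {K J : C} (E : SplitExt C K) (j : hom J (se_A E))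
  (k' : hom K J) (b' : hom (se_B E) J) :
  is_mono j -> j ∘ k' = se_k E -> j ∘ b' = se_b E -> is_iso j.
Proof.
  intros Hj Hk Hb.
  assert (HE' : is_split_ext k' (se_a E ∘ j) b').
  { destruct (se_ker E) as [Hak HkE]; split; [now rewrite <- cmp_assoc, Hb, se_ab|].
    split; [now rewrite <- cmp_assoc, Hk|].
    intros q h Hh; rewrite <- cmp_assoc in Hh.
    destruct (HkE q (j ∘ h) Hh) as [w [Hw Hw']]; exists w; split.
    - apply Hj; now rewrite cmp_assoc, Hk.
    - intros w' E'; apply Hw'; now rewrite <- Hk, <- cmp_assoc, E'. }
  apply (HP K K (mk_split_ext HE') E (idm K) j (idm (se_B E))); [|apply idm_iso..].
  unfold is_se_morph, se_morph_raw; simpl; now rewrite !cmp_id_r, cmp_id_l.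
Qed.

Lemma split_ext_factor_mono {K V Z : C} (E : SplitExt C K) (u : hom V Z)
  (h : hom (se_A E) Z) (x : hom K V) (y : hom (se_B E) V) :
  is_mono u -> h ∘ se_k E = u ∘ x -> h ∘ se_b E = u ∘ y ->
  exists z, h = u ∘ z /\ z ∘ se_k E = x /\ z ∘ se_b E = y.
Proof.
  intros Hu Hx Hy; destruct (HL _ _ _ h u) as [Q [e [e' Hpb]]].
  destruct (pullback_lift Hpb Hx) as [k' [Hk' _]].
  destruct (pullback_lift Hpb Hy) as [b' [Hb' _]].
  destruct (split_ext_mono_iso E e k' b' (pullback_mono Hpb Hu) Hk' Hb') as [ei [_ Hei]].
  assert (Hz : h = u ∘ (e' ∘ ei)).
  { now rewrite cmp_assoc, <- (proj1 Hpb), <- cmp_assoc, Hei, cmp_id_r. }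
  exists (e' ∘ ei); split; [exact Hz|split]; apply Hu; rewrite cmp_assoc, <- Hz; assumption.
Qed.

Lemma split_ext_jointly_epic {K W : C} (E : SplitExt C K) (u v : hom (se_A E) W) :
  u ∘ se_k E = v ∘ se_k E -> u ∘ se_b E = v ∘ se_b E -> u = v.
Proof.
  (* <u, v> factors through the diagonal of W × W. *)
  intros Hk Hb; destruct (products_exist HL W W) as [P [p1 [p2 HPr]]].
  destruct (product_pair (idm W) (idm W) HPr) as [δ [Hδ1 Hδ2]].
  destruct (product_pair u v HPr) as [h [Hh1 Hh2]].
  assert (Hδ : is_mono δ).
  { intros c x y E'; now rewrite <- (cmp_id_l x), <- (cmp_id_l y), <- Hδ1, <- !cmp_assoc, E'. }
  assert (Hdiag : forall c (w : hom c (se_A E)), u ∘ w = v ∘ w -> h ∘ w = δ ∘ (u ∘ w)).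
  { intros c w Hw; apply (product_hom_eq HPr); rewrite !cmp_assoc.
    - now rewrite Hh1, Hδ1, cmp_id_l.
    - now rewrite Hh2, Hδ2, cmp_id_l. }
  destruct (split_ext_factor_mono E δ h _ _ Hδ (Hdiag _ _ Hk) (Hdiag _ _ Hb))
    as [z [Hz _]].
  now rewrite <- Hh1, <- Hh2, Hz, !cmp_assoc, Hδ1, Hδ2.
Qed.

Lemma mono_of_trivial_kernel {A B : C} (f : hom A B) :
  (forall (Q : C) (w : hom Q A), f ∘ w = zero Q B -> w = zero Q A) -> is_mono f.
Proof.
  (* The diagonal of the kernel pair of f splits an extension with kernel 0. *)
  intros Hf; destruct (HL _ _ _ f f) as [R [p1 [p2 Hpb]]].
  destruct (pullback_lift Hpb (x := idm A) (y := idm A) eq_refl) as [d [Hd1 Hd2]].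
  assert (HE : is_split_ext (from_z (pzero C) R) p1 d).
  { split; [exact Hd1|split; [apply hom_from_zero_eq|]].
    intros q h Hh; exists (to_z (pzero C) q); split; [|intros; apply hom_to_zero_eq].
    rewrite cmp_through_zero; apply (pullback_hom_eq Hpb); rewrite cmp_zero_r; [now rewrite Hh|].
    symmetry; apply Hf; now rewrite cmp_assoc, <- (proj1 Hpb), <- cmp_assoc, Hh, cmp_zero_r. }
  assert (Hdm : is_mono d).
  { intros c x y E; now rewrite <- (cmp_id_l x), <- (cmp_id_l y), <- Hd1, <- !cmp_assoc, E. }
  destruct (split_ext_mono_iso (mk_split_ext HE) d (from_z _ A) (idm A) Hdm
              (hom_from_zero_eq _ _) (cmp_id_r d)) as [e [_ He]].
  assert (Hp12 : p1 = p2).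
  { rewrite <- (cmp_id_r p1), <- (cmp_id_r p2); simpl in He; rewrite <- He.
    now rewrite !cmp_assoc, Hd1, Hd2. }
  intros c g h E; destruct (pullback_lift Hpb E) as [x [Hx1 Hx2]].
  now rewrite <- Hx1, <- Hx2, Hp12.
Qed.

Lemma commute_of_trivial_action {K Z : C} (E : SplitExt C K) (φ : hom (se_A E) Z) :
  trivial_action (se_k E) (se_b E) -> commute (φ ∘ se_k E) (φ ∘ se_b E).
Proof.
  intros [r [Hrk Hrb]]; destruct (products_exist HL K (se_B E)) as [P [pr1 [pr2 HPr]]].
  destruct (product_pair (idm K) (zero K (se_B E)) HPr) as [i1 [H11 H12]].
  destruct (product_pair (zero (se_B E) K) (idm (se_B E)) HPr) as [i2 [H21 H22]].
  destruct (product_pair r (se_a E) HPr) as [θ [Hθ1 Hθ2]].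
  assert (Hθk : θ ∘ se_k E = i1).
  { apply (product_hom_eq HPr); rewrite cmp_assoc; [now rewrite Hθ1, Hrk, H11|].
    now rewrite Hθ2, H12, (proj1 (se_ker E)). }
  assert (Hθb : θ ∘ se_b E = i2).
  { apply (product_hom_eq HPr); rewrite cmp_assoc; [now rewrite Hθ1, Hrb, H21|].
    now rewrite Hθ2, H22, se_ab. }
  pose (EP := mk_split_ext (product_split_ext HPr H11 H12 H22)).
  assert (Hθ : is_iso θ).
  { apply (HP K K E EP (idm K) θ (idm (se_B E))); [|apply idm_iso..].
    unfold is_se_morph, se_morph_raw; simpl; now rewrite Hθk, Hθ2, Hθb, cmp_id_l, !cmp_id_r. }
  destruct Hθ as [ψ [Hψ _]].
  exists P, pr1, pr2, i1, i2, (φ ∘ ψ); repeat split; try assumption.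
  - now rewrite <- Hθk, <- cmp_assoc, (cmp_assoc ψ), Hψ, cmp_id_l.
  - now rewrite <- Hθb, <- cmp_assoc, (cmp_assoc ψ), Hψ, cmp_id_l.
Qed.

End Protomodular.

Section Arrow.
Context {C : PCat}.
Notation C2 := (ArrowPCat C).

Lemma arrow_hom_eq {x y : C2} (f g : hom x y) : h0 f = h0 g -> h1 f = h1 g -> f = g.
Proof. apply ahom_eq. Qed.

Lemma arrow_hsq {x y : C2} (f : hom x y) : h1 f ∘ amap x = amap y ∘ h0 f.
Proof. apply hsq. Qed.

Lemma arrow_kernel_of_components {M A B : C2} (k : hom M A) (a : hom A B) :
  is_kernel (h0 k) (h0 a) -> is_kernel (h1 k) (h1 a) -> is_kernel k a.
Proof.
  intros [Z0 U0] [Z1 U1]; split; [now apply arrow_hom_eq|].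
  intros Q h Hh.
  destruct (U0 _ (h0 h) (f_equal h0 Hh)) as [u0 [Hu0 Hu0']].
  destruct (U1 _ (h1 h) (f_equal h1 Hh)) as [u1 [Hu1 Hu1']].
  assert (Hsq : u1 ∘ amap Q = amap M ∘ u0).
  { apply (kernel_mono (conj Z1 U1)).
    rewrite !cmp_assoc, Hu1, (arrow_hsq h), (arrow_hsq k), <- Hu0; apply cmp_assoc. }
  exists (Build_ahom Hsq); split; [now apply arrow_hom_eq|].
  intros u' Hu'; apply arrow_hom_eq; [apply Hu0' | apply Hu1']; now rewrite <- Hu'.
Qed.

Lemma arrow_kernel_cod {M A B : C2} (k : hom M A) (a : hom A B) :
  is_kernel k a -> is_kernel (h1 k) (h1 a).
Proof.
  (* Test the universal property of k against the arrows 0 -> q. *)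
  intros [Z U]; split; [exact (f_equal h1 Z)|].
  intros q h Hh; pose (Q := arr_of (from_z (pzero C) q)).
  pose (hh := Build_ahom (x := Q) (y := A) (h0 := from_z _ (adom A)) (h1 := h)
                (hom_from_zero_eq _ _)).
  destruct (U Q hh) as [u [Hu Hu']].
  { apply arrow_hom_eq; [apply hom_from_zero_eq|exact Hh]. }
  exists (h1 u); split; [exact (f_equal h1 Hu)|].
  intros u1 Hu1.
  pose (uu := Build_ahom (x := Q) (y := M) (h0 := from_z _ (adom M)) (h1 := u1)
                (hom_from_zero_eq _ _)).
  rewrite <- (Hu' uu); [easy|]; apply arrow_hom_eq; [apply hom_from_zero_eq|exact Hu1].
Qed.

Lemma arrow_kernel_dom {M A B : C2} (k : hom M A) (a : hom A B) :
  is_kernel k a -> is_kernel (h0 k) (h0 a).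
Proof.
  intros Hk; pose proof (arrow_kernel_cod k a Hk) as Hk1; destruct Hk as [Z U].
  split; [exact (f_equal h0 Z)|]; intros q h Hh.
  assert (Hh1 : h1 a ∘ (amap A ∘ h) = zero q (acod B)).
  { now rewrite cmp_assoc, arrow_hsq, <- cmp_assoc, Hh, cmp_zero_r. }
  destruct (kernel_lift Hk1 Hh1) as [v Hv].
  pose (hh := Build_ahom (x := arr_of v) (y := A) (h0 := h) (h1 := h1 k) Hv).
  destruct (U _ hh) as [u [Hu Hu']]; [apply arrow_hom_eq; [exact Hh|exact (proj1 Hk1)]|].
  exists (h0 u); split; [exact (f_equal h0 Hu)|].
  intros u0 Hu0.
  assert (Hsq : idm (acod M) ∘ v = amap M ∘ u0).
  { apply (kernel_mono Hk1); now rewrite cmp_id_l, Hv, <- Hu0, !cmp_assoc, arrow_hsq. }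
  pose (uu := Build_ahom (x := arr_of v) (y := M) (h0 := u0) (h1 := idm _) Hsq).
  rewrite <- (Hu' uu); [easy|]; apply arrow_hom_eq; [exact Hu0|apply cmp_id_r].
Qed.

Lemma arrow_split_ext_dom {M A B : C2} {k : hom M A} {a : hom A B} {b : hom B A} :
  is_split_ext k a b -> is_split_ext (h0 k) (h0 a) (h0 b).
Proof. intros [Hab Hk]; exact (conj (f_equal h0 Hab) (arrow_kernel_dom k a Hk)). Qed.

Lemma arrow_split_ext_cod {M A B : C2} {k : hom M A} {a : hom A B} {b : hom B A} :
  is_split_ext k a b -> is_split_ext (h1 k) (h1 a) (h1 b).
Proof. intros [Hab Hk]; exact (conj (f_equal h1 Hab) (arrow_kernel_cod k a Hk)). Qed.

Definition split_ext_dom {M : C2} (E : SplitExt C2 M) : SplitExt C (adom M) :=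
  mk_split_ext (arrow_split_ext_dom (split_ext_spec E)).

Definition split_ext_cod {M : C2} (E : SplitExt C2 M) : SplitExt C (acod M) :=
  mk_split_ext (arrow_split_ext_cod (split_ext_spec E)).

Lemma arrow_se_morph_dom {M M' : C2} {E : SplitExt C2 M} {E' : SplitExt C2 M'} {u f g} :
  is_se_morph E E' u f g ->
  is_se_morph (split_ext_dom E) (split_ext_dom E') (h0 u) (h0 f) (h0 g).
Proof.
  intros [Hk [Ha Hb]]; exact (conj (f_equal h0 Hk) (conj (f_equal h0 Ha) (f_equal h0 Hb))).
Qed.

Lemma arrow_se_morph_cod {M M' : C2} {E : SplitExt C2 M} {E' : SplitExt C2 M'} {u f g} :
  is_se_morph E E' u f g ->
  is_se_morph (split_ext_cod E) (split_ext_cod E') (h1 u) (h1 f) (h1 g).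
Proof.
  intros [Hk [Ha Hb]]; exact (conj (f_equal h1 Hk) (conj (f_equal h1 Ha) (f_equal h1 Hb))).
Qed.

Lemma arrow_se_morph_of_components {M M' : C2} {E : SplitExt C2 M} {E' : SplitExt C2 M'}
  {u f g} :
  is_se_morph (split_ext_dom E) (split_ext_dom E') (h0 u) (h0 f) (h0 g) ->
  is_se_morph (split_ext_cod E) (split_ext_cod E') (h1 u) (h1 f) (h1 g) ->
  is_se_morph E E' u f g.
Proof.
  intros [Hk0 [Ha0 Hb0]] [Hk1 [Ha1 Hb1]]; split; [|split]; now apply arrow_hom_eq.
Qed.

Section ArrowSplitExt.
Context {M : C2} (E0 : SplitExt C (adom M)) (E1 : SplitExt C (acod M))
  (μ : hom (se_A E0) (se_A E1)) (q : hom (se_B E0) (se_B E1))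
  (H : is_se_morph E0 E1 (amap M) μ q).

Definition arrow_split_ext_k : hom M (arr_of μ) :=
  Build_ahom (x := M) (y := arr_of μ) (eq_sym (proj1 H)).
Definition arrow_split_ext_a : hom (arr_of μ : C2) (arr_of q) :=
  Build_ahom (x := arr_of μ) (y := arr_of q) (proj1 (proj2 H)).
Definition arrow_split_ext_b : hom (arr_of q : C2) (arr_of μ) :=
  Build_ahom (x := arr_of q) (y := arr_of μ) (eq_sym (proj2 (proj2 H))).

Lemma arrow_split_ext_spec :
  is_split_ext arrow_split_ext_k arrow_split_ext_a arrow_split_ext_b.
Proof.
  split; [apply arrow_hom_eq; apply se_ab|].
  apply arrow_kernel_of_components; apply se_ker.
Qed.

Definition arrow_split_ext : SplitExt C2 M := mk_split_ext arrow_split_ext_spec.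

End ArrowSplitExt.

Lemma arrow_has_pullbacks : has_pullbacks C -> has_pullbacks C2.
Proof.
  intros HL a b c f g.
  destruct (HL _ _ _ (h0 f) (h0 g)) as [P0 [pa0 [pb0 H0]]].
  destruct (HL _ _ _ (h1 f) (h1 g)) as [P1 [pa1 [pb1 H1]]].
  destruct (pullback_lift H1 (x := amap a ∘ pa0) (y := amap b ∘ pb0)) as [μ [Hμa Hμb]].
  { now rewrite !cmp_assoc, !arrow_hsq, <- !cmp_assoc, (proj1 H0). }
  exists (arr_of μ), (Build_ahom (x := arr_of μ) (y := a) Hμa),
    (Build_ahom (x := arr_of μ) (y := b) Hμb).
  split; [apply arrow_hom_eq; [exact (proj1 H0)|exact (proj1 H1)]|].
  intros q qa qb Hq.
  destruct (proj2 H0 _ _ _ (f_equal h0 Hq)) as [u0 [[Hu0a Hu0b] U0]].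
  destruct (proj2 H1 _ _ _ (f_equal h1 Hq)) as [u1 [[Hu1a Hu1b] U1]].
  assert (Hsq : u1 ∘ amap q = μ ∘ u0).
  { apply (pullback_hom_eq H1); rewrite !cmp_assoc; cbn.
    - now rewrite Hu1a, Hμa, arrow_hsq, <- cmp_assoc, Hu0a.
    - now rewrite Hu1b, Hμb, arrow_hsq, <- cmp_assoc, Hu0b. }
  exists (Build_ahom (x := q) (y := arr_of μ) Hsq).
  split; [split; now apply arrow_hom_eq|].
  intros u' Hua Hub; apply arrow_hom_eq; cbn.
  - apply U0; [exact (f_equal h0 Hua)|exact (f_equal h0 Hub)].
  - apply U1; [exact (f_equal h1 Hua)|exact (f_equal h1 Hub)].
Qed.

End Arrow.

Section GenericArrow.
Context {C : PCat} (HP : is_protomodular C) (HL : has_pullbacks C).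
Notation C2 := (ArrowPCat C).

Lemma generic_cod {M : C2} {GM : SplitExt C2 M} :
  is_generic GM -> is_generic (split_ext_cod GM).
Proof.
  (* F is the codomain row of an extension of m in C^2 with domain row S -> S ⇄ 0. *)
  intros HGM F.
  assert (H : is_se_morph (mk_split_ext (idm_split_ext (adom M))) F
                (amap M) (se_k F ∘ amap M) (from_z _ (se_B F))).
  { split; [apply cmp_id_r|split; [|apply hom_from_zero_eq]]; cbn.
    now rewrite cmp_assoc, (proj1 (se_ker F)), cmp_zero_l, cmp_through_zero. }
  destruct (HGM (arrow_split_ext _ F _ _ H)) as [fA [gB [Hmor Huniq]]].
  exists (h1 fA), (h1 gB); split; [exact (arrow_se_morph_cod Hmor)|].
  intros f w Hfw; pose proof Hfw as [Hfk [_ Hfb]].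
  assert (Hsq : f ∘ (se_k F ∘ amap M) = amap (se_A GM) ∘ h0 (se_k GM)).
  { rewrite cmp_assoc, Hfk, cmp_id_r; exact (arrow_hsq (se_k GM)). }
  pose (fA' := Build_ahom (x := arr_of (se_k F ∘ amap M)) (y := se_A GM) Hsq).
  pose (gB' := Build_ahom (x := arr_of (from_z _ (se_B F))) (y := se_B GM)
                 (h0 := from_z _ _) (h1 := w) (hom_from_zero_eq _ _)).
  assert (Hmor' : is_se_morph (arrow_split_ext _ F _ _ H) GM (idm _) fA' gB').
  { apply arrow_se_morph_of_components; [|exact Hfw].
    split; [reflexivity|split; [|apply hom_from_zero_eq]]; cbn.
    rewrite cmp_through_zero; exact (proj1 (arrow_kernel_dom _ _ (se_ker GM))). }
  destruct (Huniq fA' gB' Hmor') as [HfA HgB].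
  assert (Hw : w = h1 gB) by (now rewrite <- HgB).
  split; [|exact Hw].
  destruct (arrow_se_morph_cod Hmor) as [Hk [_ Hb]].
  apply (split_ext_jointly_epic HP HL F).
  - transitivity (se_k (split_ext_cod GM) ∘ idm (acod M)); [exact Hfk|].
    symmetry; exact Hk.
  - transitivity (se_b (split_ext_cod GM) ∘ w); [exact Hfb|].
    rewrite Hw; symmetry; exact Hb.
Qed.

Lemma arrow_trivial_action_of_cod {M : C2} {Y : C} {pi : hom (acod M) Y}
  (Hm : is_kernel (amap M) pi) (E : SplitExt C2 M) :
  trivial_action (h1 (se_k E)) (h1 (se_b E)) -> trivial_action (se_k E) (se_b E).
Proof.
  (* pi r1 vanishes on the domain row, so r1 restricts along m = ker pi. *)
  intros [r1 [Hr1k Hr1b]].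
  pose proof (arrow_hsq (se_k E)) as Hk; pose proof (arrow_hsq (se_b E)) as Hb.
  assert (Hpi : pi ∘ (r1 ∘ amap (se_A E)) = zero _ Y).
  { apply (split_ext_jointly_epic HP HL (split_ext_dom E)); cbn;
      rewrite cmp_zero_l, <- !cmp_assoc.
    - now rewrite <- Hk, (cmp_assoc r1), Hr1k, cmp_id_l, (proj1 Hm).
    - now rewrite <- Hb, (cmp_assoc r1), Hr1b, cmp_zero_l, cmp_zero_r. }
  destruct (kernel_lift Hm Hpi) as [r0 Hr0].
  exists (Build_ahom (x := se_A E) (y := M) (eq_sym Hr0)).
  split; apply arrow_hom_eq; cbn; try assumption; apply (kernel_mono Hm);
    rewrite cmp_assoc, Hr0, <- cmp_assoc.
  - now rewrite <- Hk, cmp_assoc, Hr1k, cmp_id_l, cmp_id_r.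
  - now rewrite <- Hb, cmp_assoc, Hr1b, cmp_zero_l, cmp_through_zero, cmp_zero_r.
Qed.

End GenericArrow.

Section GenericArrowExtension.
Context {C : PCat} (HP : is_protomodular C) (HL : has_pullbacks C)
  {M : ArrowPCat C} {Y : C} {pi : hom (acod M) Y} (Hm : is_kernel (amap M) pi)
  {GM : SplitExt (ArrowPCat C) M} (HGM : is_generic GM).

Notation GM0 := (split_ext_dom GM).
Notation GM1 := (split_ext_cod GM).
Notation B0 := (adom (se_B GM)).
Notation q2 := (amap (se_B GM)).

Lemma q2_classified_ext (T : C) (g : hom T B0) :
  exists (P : C) (k : hom (acod M) P) (a : hom P T) (b : hom T P) (f : hom P (se_A GM1)),
    is_split_ext k a b /\
    se_morph_raw k a b (se_k GM1) (se_a GM1) (se_b GM1) (idm (acod M)) f (q2 ∘ g) /\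
    (trivial_action k b -> g = zero T B0).
Proof.
  pose (gg := Build_ahom (x := arr_of (idm T)) (y := se_B GM) (h0 := g) (h1 := q2 ∘ g)
                (cmp_id_r _)).
  destruct (split_ext_pullback (arrow_has_pullbacks HL) GM gg) as [P [k [a [b [f [HE Hf]]]]]].
  exists (acod P), (h1 k), (h1 a), (h1 b), (h1 f); split; [exact (arrow_split_ext_cod HE)|].
  split; [exact (arrow_se_morph_cod (E := mk_split_ext HE) Hf)|].
  intros Htriv.
  exact (f_equal h0 (generic_base_zero HGM (mk_split_ext HE) Hf
                       (arrow_trivial_action_of_cod HP HL Hm (mk_split_ext HE) Htriv))).
Qed.

Lemma q2_mono : is_mono q2.
Proof.
  apply (mono_of_trivial_kernel HP HL); intros T g Hg.
  destruct (q2_classified_ext T g) as [P [k [a [b [f [_ [Hf Htriv]]]]]]].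
  apply Htriv; rewrite Hg in Hf; exact (trivial_action_of_zero_base GM1 f Hf).
Qed.

Lemma conjugation_classifier {R : C} {kR : hom (adom M) R} {r1 r2 : hom R (acod M)}
  {dR : hom (acod M) R} {P : C} {kX : hom (acod M) P} {p1 p2 : hom P (acod M)}
  {dX : hom (acod M) P} :
  is_conjugation_ext (amap M) pi kR r1 r2 dR ->
  is_conjugation_ext (idm (acod M)) (to_z (pzero C) (acod M)) kX p1 p2 dX ->
  exists (c : hom (acod M) B0) (fR : hom R (se_A GM0)) (fX : hom P (se_A GM1)),
    se_morph_raw kR r1 dR (se_k GM0) (se_a GM0) (se_b GM0) (idm (adom M)) fR c /\
    se_morph_raw kX p1 dX (se_k GM1) (se_a GM1) (se_b GM1) (idm (acod M)) fX (q2 ∘ c).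
Proof.
  intros HR HX.
  destruct (conjugation_ext_map (amap M) (idm _) (to_z (pzero C) Y) HR HX) as [j Hj];
    [reflexivity|apply hom_to_zero_eq|].
  pose (ER := mk_split_ext (conjugation_ext_split Hm HR)).
  pose (EX := mk_split_ext (conjugation_ext_split (idm_kernel _) HX)).
  destruct (HGM (arrow_split_ext ER EX j (idm _) Hj)) as [fA [gB [Hmor _]]].
  exists (h0 gB), (h0 fA), (h1 fA); split; [exact (arrow_se_morph_dom Hmor)|].
  assert (Hq : h1 gB = q2 ∘ h0 gB) by (rewrite <- (arrow_hsq gB); symmetry; apply cmp_id_r).
  pose proof (arrow_se_morph_cod Hmor) as Hcod; rewrite Hq in Hcod; exact Hcod.
Qed.

Lemma conjugation_classifier_trivial_kernel (Hcent : trivial_centralizer (amap M))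
  {R : C} {kR : hom (adom M) R} {r1 r2 : hom R (acod M)} {dR : hom (acod M) R}
  (HR : is_conjugation_ext (amap M) pi kR r1 r2 dR)
  (E : SplitExt C (adom M)) {fR : hom R (se_A E)} {c : hom (acod M) (se_B E)} :
  se_morph_raw kR r1 dR (se_k E) (se_a E) (se_b E) (idm (adom M)) fR c ->
  forall (W : C) (w : hom W (acod M)), c ∘ w = zero W (se_B E) -> w = zero W (acod M).
Proof.
  intros Hc W w Hw.
  destruct (split_ext_pullback HL (mk_split_ext (conjugation_ext_split Hm HR)) w)
    as [PW [kW [aW [sW [e [HW He]]]]]].
  cbn in He; pose proof (se_morph_cmp He Hc) as Hcomp; rewrite Hw, cmp_id_l in Hcomp.
  pose proof (commute_of_trivial_action HP HL (mk_split_ext HW) (r2 ∘ e)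
                (trivial_action_of_zero_base E _ Hcomp)) as Hcomm; cbn in Hcomm.
  destruct He as [Hek [_ Heb]]; pose proof HR as [_ [_ [Hr2k [_ Hr2d]]]].
  rewrite <- cmp_assoc, Hek, cmp_id_r, Hr2k in Hcomm.
  rewrite <- cmp_assoc, Heb, cmp_assoc, Hr2d, cmp_id_l in Hcomm.
  exact (trivial_centralizer_commute _ Hcent _ _ Hcomm).
Qed.

Lemma semidirect_conjugation_factor {T : C} (g : hom T B0) {PD : C}
  {kD : hom (acod M) PD} {td : hom PD T} {sD : hom T PD} {pd : hom PD (se_A GM1)}
  (HD : is_split_ext kD td sD)
  (MD : se_morph_raw kD td sD (se_k GM1) (se_a GM1) (se_b GM1) (idm (acod M)) pd (q2 ∘ g))
  {c : hom (acod M) B0} {P : C} {kX : hom (acod M) P} {p1 p2 : hom P (acod M)}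
  {dX : hom (acod M) P} (HX : is_conjugation_ext (idm _) (to_z (pzero C) _) kX p1 p2 dX)
  {fX : hom P (se_A GM1)}
  (MX : se_morph_raw kX p1 dX (se_k GM1) (se_a GM1) (se_b GM1) (idm (acod M)) fX (q2 ∘ c)) :
  exists φ : hom PD B0, φ ∘ kD = c /\ φ ∘ sD = g.
Proof.
  (* The conjugation action of D on X restricts to the one of X along kD and to D
     itself along sD. *)
  destruct (conjugation_ext_exists HL kD td (proj1 (proj2 HD)))
    as [SD [kS [u1 [u2 [dS HS]]]]].
  pose (ES := mk_split_ext (conjugation_ext_split (proj2 HD) HS)).
  destruct (generic_cod HP HL HGM ES) as [fS [d [MS _]]].
  destruct (conjugation_ext_map (idm _) kD (from_z (pzero C) T) HX HS) as [j1 M1];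
    [reflexivity|rewrite (proj1 (proj2 HD)); symmetry; apply cmp_through_zero|].
  destruct (conjugation_ext_section HD HS) as [j2 M2].
  assert (Hdk : d ∘ kD = q2 ∘ c).
  { pose proof (se_morph_cmp M1 MS) as H; rewrite cmp_id_l in H.
    exact (generic_base_unique (generic_cod HP HL HGM)
             (mk_split_ext (conjugation_ext_split (idm_kernel _) HX)) H MX). }
  assert (Hds : d ∘ sD = q2 ∘ g).
  { pose proof (se_morph_cmp M2 MS) as H; rewrite cmp_id_l in H.
    exact (generic_base_unique (generic_cod HP HL HGM) (mk_split_ext HD) H MD). }
  destruct (split_ext_factor_mono HP HL (mk_split_ext HD) q2 d c g q2_mono
              Hdk Hds) as [φ [_ Hφ]].
  now exists φ.
Qed.

Lemma q1_mono (Hcent : trivial_centralizer (amap M))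
  (GS : SplitExt C (adom M)) {f : hom (se_A GM0) (se_A GS)} {q1 : hom B0 (se_B GS)} :
  is_se_morph GM0 GS (idm _) f q1 -> is_mono q1.
Proof.
  intros Hf.
  destruct (conjugation_ext_exists HL (amap M) pi (proj1 Hm)) as [R [kR [r1 [r2 [dR HR]]]]].
  destruct (conjugation_ext_exists HL (idm _) _ (proj1 (idm_kernel (acod M))))
    as [P [kX [p1 [p2 [dX HX]]]]].
  destruct (conjugation_classifier HR HX) as [c [fR [fX [MR MX]]]].
  assert (Hc : is_mono (q1 ∘ c)).
  { pose proof (se_morph_cmp MR Hf) as H; rewrite cmp_id_l in H.
    exact (mono_of_trivial_kernel HP HL _
             (conjugation_classifier_trivial_kernel Hcent HR GS H)). }
  apply (mono_of_trivial_kernel HP HL); intros T g Hg.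
  destruct (q2_classified_ext T g) as [PD [kD [td [sD [pd [HD [MD Htriv]]]]]]].
  destruct (semidirect_conjugation_factor g HD MD HX MX) as [φ [Hφk Hφs]].
  destruct (split_ext_factor_mono HP HL (mk_split_ext HD) (q1 ∘ c) (q1 ∘ φ)
              (idm _) (zero T _) Hc) as [ρ [_ Hρ]]; cbn.
  - now rewrite <- cmp_assoc, Hφk, cmp_id_r.
  - now rewrite <- cmp_assoc, Hφs, Hg, cmp_zero_r.
  - apply Htriv; now exists ρ.
Qed.

End GenericArrowExtension.

Theorem proposition3p7 (C : PCat) (Hlim : has_finite_limits C)
  (Hproto : is_protomodular C) (S X : C) (m : hom S X)
  (Hnormal : is_normal_mono m)
  (GS : SplitExt C S) (HGS : is_generic GS)
  (GM : SplitExt (ArrowPCat C) (arr_of m)) (HGM : is_generic GM) :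
  trivial_centralizer m ->
  exists (f : hom (adom (se_A GM)) (se_A GS)) (q1 : hom (adom (se_B GM)) (se_B GS)),
    se_morph_raw (h0 (se_k GM)) (h0 (se_a GM)) (h0 (se_b GM))
                 (se_k GS) (se_a GS) (se_b GS) (idm S) f q1 /\
    (forall f' q1',
       se_morph_raw (h0 (se_k GM)) (h0 (se_a GM)) (h0 (se_b GM))
                    (se_k GS) (se_a GS) (se_b GS) (idm S) f' q1' ->
       f' = f /\ q1' = q1) /\
    is_mono q1.
Proof.
  intros Hcent.
  destruct Hnormal as [Y [pi Hm]], Hlim as [_ HL].
  destruct (HGS (split_ext_dom GM)) as [f [q1 [Hf Huniq]]].
  exists f, q1; split; [exact Hf|split; [exact Huniq|]].
  exact (q1_mono Hproto HL (M := arr_of m) Hm HGM Hcent GS Hf).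
Qed.
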